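(* For every polynomial knot $\phi:\mathbb R\to\mathbb R^3$ there exist a nonzero vector $v\in\mathbb R^3$ and a smooth map $F:[0,1]\times\mathbb R\to\mathbb R^3$ such that for every $s\in[0,1]$ the map $F_s=F(s,\cdot)$ is a polynomial knot, $F_0(t)=tv$ for all $t\in\mathbb R$, and $F_1=\phi$.
   Context: A polynomial knot is a map $\phi:\mathbb R\to\mathbb R^3$ whose components are real polynomials and which is a smooth embedding, i.e. $\phi$ is injective and $\phi'(t)\ne0$ for all $t\in\mathbb R$. *)

From Stdlib Require Import Reals List.
Open Scope R_scope.

Definition R3 : Type := (R * R * R)%type.
Definition cx (p : R3) : R := fst (fst p).
Definition cy (p : R3) : R := snd (fst p).
Definition cz (p : R3) : R := snd p.
Definition R3zero : R3 := (0, 0, 0).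
Definition R3scale (a : R) (v : R3) : R3 := (a * cx v, a * cy v, a * cz v).

(* Evaluation of a real polynomial given by its coefficient list
   [a0; a1; ...; an] (Horner scheme). *)
Definition peval (l : list R) (t : R) : R :=
  fold_right (fun a acc => a + t * acc) 0 l.

Definition is_poly_fun (f : R -> R) : Prop :=
  exists l : list R, forall t, f t = peval l t.

Definition poly_knot (phi : R -> R3) : Prop :=
  is_poly_fun (fun t => cx (phi t)) /\
  is_poly_fun (fun t => cy (phi t)) /\
  is_poly_fun (fun t => cz (phi t)) /\
  (forall t1 t2, phi t1 = phi t2 -> t1 = t2) /\
  (forall t, exists d1 d2 d3 : R,
      derivable_pt_lim (fun u => cx (phi u)) t d1 /\
      derivable_pt_lim (fun u => cy (phi u)) t d2 /\
      derivable_pt_lim (fun u => cz (phi u)) t d3 /\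
      (d1, d2, d3) <> R3zero).

Definition open2 (U : R -> R -> Prop) : Prop :=
  forall s t, U s t -> exists d, 0 < d /\
    forall s' t', Rabs (s' - s) < d -> Rabs (t' - t) < d -> U s' t'.

Definition cont2_on (U : R -> R -> Prop) (f : R -> R -> R) : Prop :=
  forall s t, U s t -> forall e, 0 < e -> exists d, 0 < d /\
    forall s' t', Rabs (s' - s) < d -> Rabs (t' - t) < d ->
      Rabs (f s' t' - f s t) < e.

Fixpoint Ck_on (k : nat) (U : R -> R -> Prop) (f : R -> R -> R) : Prop :=
  match k with
  | O => cont2_on U f
  | S k' => cont2_on U f /\
      exists fs ft : R -> R -> R,
        (forall s t, U s t ->
           derivable_pt_lim (fun x => f x t) s (fs s t) /\
           derivable_pt_lim (fun y => f s y) t (ft s t)) /\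
        Ck_on k' U fs /\ Ck_on k' U ft
  end.

Definition smooth_on (U : R -> R -> Prop) (f : R -> R -> R) : Prop :=
  forall k, Ck_on k U f.

(* F : [0,1] x R -> R^3 is smooth: it is smooth (C^infinity) on some open
   neighbourhood of [0,1] x R in R^2 (standard definition of smoothness on a
   non-open subset). Values of F outside [0,1] x R are irrelevant. *)
Definition smooth_strip (F : R -> R -> R3) : Prop :=
  exists U : R -> R -> Prop, open2 U /\
    (forall s t, 0 <= s <= 1 -> U s t) /\
    smooth_on U (fun s t => cx (F s t)) /\
    smooth_on U (fun s t => cy (F s t)) /\
    smooth_on U (fun s t => cz (F s t)).

(* Write phi(t) = a + t q(t) componentwise, with a = phi(0) and q(0) = phi'(0).
   The homotopy F_s(t) = s a + t q(s t) is polynomial in (s, t).  For s <> 0 it is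
   the affine image (phi(s t) - a)/s + s a of a reparametrisation of phi, hence an
   injective immersion with F_s'(t) = phi'(s t); at s = 0 it is the line t phi'(0). *)

From Stdlib Require Import Reals List Lra FunctionalExtensionality.
From Coquelicot Require Import Coquelicot.
Open Scope R_scope.

Inductive poly2 : (R -> R -> R) -> Prop :=
| poly2_const c : poly2 (fun _ _ => c)
| poly2_fst : poly2 (fun s _ => s)
| poly2_snd : poly2 (fun _ t => t)
| poly2_add f g : poly2 f -> poly2 g -> poly2 (fun s t => f s t + g s t)
| poly2_mul f g : poly2 f -> poly2 g -> poly2 (fun s t => f s t * g s t).

Lemma poly2_continuous f : poly2 f ->
  forall X : R * R, continuous (fun X : R * R => f (fst X) (snd X)) X.
Proof.
  induction 1; intros X.
  - apply continuous_const.
  - apply continuous_fst.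
  - apply continuous_snd.
  - now apply (continuous_plus (fun X => f (fst X) (snd X)) (fun X => g (fst X) (snd X))).
  - now apply (continuous_mult (fun X => f (fst X) (snd X)) (fun X => g (fst X) (snd X))).
Qed.

Lemma poly2_cont2_on U f : poly2 f -> cont2_on U f.
Proof.
  intros Hf s t _ e He.
  pose proof (poly2_continuous f Hf (s, t)) as Hcont.
  apply filterlim_locally with (eps := mkposreal e He) in Hcont.
  destruct Hcont as [d Hd].
  exists d; split; [apply cond_pos|].
  intros s' t' Hs Ht; apply (Hd (s', t')); now split.
Qed.

Lemma poly2_partials f : poly2 f -> exists fs ft, poly2 fs /\ poly2 ft /\
  forall s t, derivable_pt_lim (fun x => f x t) s (fs s t) /\
              derivable_pt_lim (fun y => f s y) t (ft s t).
Proof.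
  induction 1 as [c| | |f g _ [fs [ft [Hfs [Hft Df]]]] _ [gs [gt [Hgs [Hgt Dg]]]]
                         |f g Hf [fs [ft [Hfs [Hft Df]]]] Hg [gs [gt [Hgs [Hgt Dg]]]]].
  - exists (fun _ _ => 0), (fun _ _ => 0); repeat split; try constructor;
      apply derivable_pt_lim_const.
  - exists (fun _ _ => 1), (fun _ _ => 0); repeat split; try constructor.
    + apply derivable_pt_lim_id.
    + apply derivable_pt_lim_const.
  - exists (fun _ _ => 0), (fun _ _ => 1); repeat split; try constructor.
    + apply derivable_pt_lim_const.
    + apply derivable_pt_lim_id.
  - exists (fun s t => fs s t + gs s t), (fun s t => ft s t + gt s t).
    do 2 (split; [now constructor|]); intros s t; split.
    + now apply (derivable_pt_lim_plus (fun x => f x t) (fun x => g x t)); [apply Df|apply Dg].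
    + now apply (derivable_pt_lim_plus (fun y => f s y) (fun y => g s y)); [apply Df|apply Dg].
  - exists (fun s t => fs s t * g s t + f s t * gs s t),
           (fun s t => ft s t * g s t + f s t * gt s t).
    do 2 (split; [now repeat constructor|]); intros s t; split.
    + now apply (derivable_pt_lim_mult (fun x => f x t) (fun x => g x t)); [apply Df|apply Dg].
    + now apply (derivable_pt_lim_mult (fun y => f s y) (fun y => g s y)); [apply Df|apply Dg].
Qed.

Lemma poly2_smooth_on U f : poly2 f -> smooth_on U f.
Proof.
  intros Hf k; revert f Hf; induction k as [|k IHk]; intros f Hf; simpl.
  - now apply poly2_cont2_on.
  - split; [now apply poly2_cont2_on|].
    destruct (poly2_partials f Hf) as [fs [ft [Hfs [Hft Df]]]].
    exists fs, ft; split; [intros s t _; apply Df|now split; apply IHk].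
Qed.

Lemma peval_cons_hd_tl l t : peval l t = hd 0 l + t * peval (tl l) t.
Proof. destruct l; simpl; ring. Qed.

Lemma poly2_peval_mul l : poly2 (fun s t => peval l (s * t)).
Proof.
  induction l as [|a l IHl]; simpl; repeat constructor; assumption.
Qed.

Lemma ex_derive_peval l x : ex_derive (peval l) x.
Proof.
  induction l as [|a l IHl]; simpl.
  - apply ex_derive_const.
  - apply (ex_derive_plus (fun _ => a) (fun t => t * peval l t)).
    + apply ex_derive_const.
    + apply (ex_derive_mult (fun t => t) (peval l)); [apply ex_derive_id|apply IHl].
Qed.

Lemma is_derive_peval l w :
  is_derive (peval l) w (peval (tl l) w + w * Derive (peval (tl l)) w).
Proof.
  apply (is_derive_ext (fun u => hd 0 l + u * peval (tl l) u));
    [intros u; symmetry; apply peval_cons_hd_tl|].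
  auto_derive; [apply ex_derive_peval|].
  change (fun x => peval (tl l) x) with (peval (tl l)); ring.
Qed.

Lemma peval_map_mult s l t : peval (map (Rmult s) l) t = s * peval l t.
Proof. induction l as [|a l IHl]; simpl; [|rewrite IHl]; ring. Qed.

Fixpoint dilate (s : R) (l : list R) : list R :=
  match l with nil => nil | a :: l' => a :: map (Rmult s) (dilate s l') end.

Lemma peval_dilate s l t : peval (dilate s l) t = peval l (s * t).
Proof. induction l as [|a l IHl]; simpl; [|rewrite peval_map_mult, IHl]; ring. Qed.

Definition shrink (l : list R) (s t : R) : R := s * hd 0 l + t * peval (tl l) (s * t).

Lemma poly2_shrink l : poly2 (shrink l).
Proof. unfold shrink; repeat constructor; apply poly2_peval_mul. Qed.

Lemma is_poly_fun_shrink l s : is_poly_fun (shrink l s).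
Proof.
  exists (s * hd 0 l :: dilate s (tl l)); intros t.
  unfold shrink; simpl; rewrite peval_dilate; ring.
Qed.

Lemma shrink_1 l t : shrink l 1 t = peval l t.
Proof. unfold shrink; rewrite !Rmult_1_l, (peval_cons_hd_tl l); ring. Qed.

Lemma shrink_0 l t : shrink l 0 t = t * peval (tl l) 0.
Proof. unfold shrink; rewrite !Rmult_0_l; ring. Qed.

Lemma peval_mul_shrink l s t :
  peval l (s * t) = s * shrink l s t + (1 - s * s) * hd 0 l.
Proof. unfold shrink; rewrite (peval_cons_hd_tl l); ring. Qed.

Lemma shrink_inj l s t1 t2 :
  shrink l s t1 = shrink l s t2 -> peval l (s * t1) = peval l (s * t2).
Proof. intros E; now rewrite !peval_mul_shrink, E. Qed.

Lemma derivable_pt_lim_shrink l s t d :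
  derivable_pt_lim (peval l) (s * t) d -> derivable_pt_lim (shrink l s) t d.
Proof.
  intros Hd; apply is_derive_Reals in Hd.
  rewrite <-(is_derive_unique _ _ _ Hd), (is_derive_unique _ _ _ (is_derive_peval l (s * t))).
  apply is_derive_Reals; unfold shrink; auto_derive; [apply ex_derive_peval|].
  change (fun x => peval (tl l) x) with (peval (tl l)); ring.
Qed.

Lemma derivable_pt_lim_peval_0 l d :
  derivable_pt_lim (peval l) 0 d -> d = peval (tl l) 0.
Proof.
  intros Hd; apply is_derive_Reals in Hd.
  rewrite <-(is_derive_unique _ _ _ Hd), (is_derive_unique _ _ _ (is_derive_peval l 0)); ring.
Qed.

Lemma R3_eta (p : R3) : p = (cx p, cy p, cz p).
Proof. now destruct p as [[x y] z]. Qed.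

Lemma R3scale_inj_l v t1 t2 : v <> R3zero -> R3scale t1 v = R3scale t2 v -> t1 = t2.
Proof.
  destruct v as [[x y] z]; unfold R3scale, R3zero, cx, cy, cz; simpl.
  intros Hv E; injection E as Ex Ey Ez.
  destruct (Req_dec x 0) as [->|Hx]; [destruct (Req_dec y 0) as [->|Hy];
    [destruct (Req_dec z 0) as [->|Hz]|]|].
  - now contradiction Hv.
  - now apply (Rmult_eq_reg_r z).
  - now apply (Rmult_eq_reg_r y).
  - now apply (Rmult_eq_reg_r x).
Qed.

Definition pcurve (lx ly lz : list R) (t : R) : R3 := (peval lx t, peval ly t, peval lz t).

Lemma poly_knot_pcurve phi : poly_knot phi -> exists lx ly lz, phi = pcurve lx ly lz.
Proof.
  intros [[lx Hx] [[ly Hy] [[lz Hz] _]]]; exists lx, ly, lz.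
  apply functional_extensionality; intros t.
  now rewrite (R3_eta (phi t)), Hx, Hy, Hz.
Qed.

Section ShrinkCurve.
Variables lx ly lz : list R.
Hypothesis knot : poly_knot (pcurve lx ly lz).

Definition shrink_curve (s t : R) : R3 := (shrink lx s t, shrink ly s t, shrink lz s t).

Definition tangent0 : R3 := (peval (tl lx) 0, peval (tl ly) 0, peval (tl lz) 0).

Lemma tangent0_neq0 : tangent0 <> R3zero.
Proof.
  destruct knot as (_ & _ & _ & _ & Hder).
  destruct (Hder 0) as (d1 & d2 & d3 & D1 & D2 & D3 & Hd).
  apply derivable_pt_lim_peval_0 in D1, D2, D3.
  unfold tangent0; congruence.
Qed.

Lemma shrink_curve_0 t : shrink_curve 0 t = R3scale t tangent0.
Proof. unfold shrink_curve; now rewrite !shrink_0. Qed.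

Lemma shrink_curve_1 t : shrink_curve 1 t = pcurve lx ly lz t.
Proof. unfold shrink_curve; now rewrite !shrink_1. Qed.

Lemma shrink_curve_inj s t1 t2 : shrink_curve s t1 = shrink_curve s t2 -> t1 = t2.
Proof.
  destruct (Req_dec s 0) as [->|Hs]; intros E.
  - rewrite !shrink_curve_0 in E; exact (R3scale_inj_l _ _ _ tangent0_neq0 E).
  - injection E as Ex Ey Ez.
    destruct knot as (_ & _ & _ & Hinj & _).
    apply (Rmult_eq_reg_l s); [apply Hinj|exact Hs].
    unfold pcurve; f_equal; [f_equal|]; now apply shrink_inj.
Qed.

Lemma poly_knot_shrink_curve s : poly_knot (shrink_curve s).
Proof.
  destruct knot as (_ & _ & _ & _ & Hder).
  unfold poly_knot, shrink_curve, cx, cy, cz; simpl.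
  do 3 (split; [apply is_poly_fun_shrink|]); split.
  - exact (shrink_curve_inj s).
  - intros t; destruct (Hder (s * t)) as (d1 & d2 & d3 & D1 & D2 & D3 & Hd).
    exists d1, d2, d3; now repeat split; try apply derivable_pt_lim_shrink.
Qed.

Lemma smooth_strip_shrink_curve : smooth_strip shrink_curve.
Proof.
  exists (fun _ _ => True); repeat split.
  - intros s t _; exists 1; split; [lra|auto].
  - apply poly2_smooth_on, poly2_shrink.
  - apply poly2_smooth_on, poly2_shrink.
  - apply poly2_smooth_on, poly2_shrink.
Qed.

End ShrinkCurve.

Theorem mainTheorem7 :
  forall phi : R -> R3, poly_knot phi ->
  exists (v : R3) (F : R -> R -> R3),
    v <> R3zero /\
    smooth_strip F /\
    (forall s, 0 <= s <= 1 -> poly_knot (F s)) /\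
    (forall t, F 0 t = R3scale t v) /\
    (forall t, F 1 t = phi t).
Proof.
  intros phi knot.
  destruct (poly_knot_pcurve phi knot) as (lx & ly & lz & ->).
  exists (tangent0 lx ly lz), (shrink_curve lx ly lz).
  split; [|split; [|split; [|split]]].
  - now apply tangent0_neq0.
  - apply smooth_strip_shrink_curve.
  - intros s _; now apply poly_knot_shrink_curve.
  - apply shrink_curve_0.
  - apply shrink_curve_1.
Qed.
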